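(* Let $\ell\geq 1$ be an integer, let $\xi\in\mathbb{R}$, $h\in\mathbb{R}\setminus\{0\}$, and let $x_i=\xi+ih$ for $i=0,1,\ldots,\ell$. Let $\mathbf{a}=(a_0,\ldots,a_\ell)\in\mathbb{R}^{\ell+1}$ and let $q_{\mathbf{a}}$ be the unique real polynomial of degree at most $\ell$ with $q_{\mathbf{a}}(x_i)=a_i$ for $i=0,\ldots,\ell$. For an integer $s\geq 0$ let $A_{s,\mathbf{a}}\in M_{\ell+1}(\mathbb{R})$ be the matrix with entries \[ (A_{s,\mathbf{a}})_{ij}=\big((i-1)(\ell+1)+j\big)^{\ell-1}\quad (1\leq i\leq \ell,\ 1\leq j\leq \ell+1),\qquad (A_{s,\mathbf{a}})_{\ell+1,j}=(j-1)^s a_{j-1}\quad (1\leq j\leq \ell+1), \] i.e. \[ A_{s,\mathbf{a}}=\begin{pmatrix} 1^{\ell-1} & 2^{\ell-1}&\cdots& (\ell+1)^{\ell-1}\\ (\ell+2)^{\ell-1} & (\ell+3)^{\ell-1}&\cdots& (2\ell+2)^{\ell-1}\\ \vdots &\vdots &&\vdots \\ (\ell^{2})^{\ell-1} & (\ell^{2}+1)^{\ell-1} &\cdots& (\ell^2+\ell)^{\ell-1}\\ 0^sa_0 &1^sa_1&\cdots &\ell^sa_\ell \end{pmatrix}. \] Then for an integer $m$ with $0\leq m\leq \ell$, the polynomial $q_{\mathbf{a}}$ has degree exactly $\ell-m$ if and only if $\det A_{s,\mathbf{a}}=0$ for $s=0,\ldots,m-1$ and $\det A_{m,\mathbf{a}}\neq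 0$.
   Context: The convention $0^0=1$ is used in the last row of $A_{s,\mathbf{a}}$. *)

From HB Require Import structures.
From mathcomp Require Import all_boot all_order all_algebra.
Set Implicit Arguments. Unset Strict Implicit. Unset Printing Implicit Defensive.
Import Order.TTheory GRing.Theory Num.Theory.
Local Open Scope ring_scope.

(* The matrix A_{s,a} of size (l+1) x (l+1), with 0-based indices i j:
   rows i < l : ((i*(l+1) + j + 1))^(l-1)   (1-based: ((i-1)(l+1)+j)^(l-1))
   row  i = l : j^s * a_j   (with 0^0 = 1, which holds for ^+ in MathComp). *)
Definition A_mat (R : realFieldType) (l s : nat) (a : 'I_l.+1 -> R) : 'M[R]_l.+1 :=
  \matrix_(i < l.+1, j < l.+1)
    if (i < l)%N then ((i * l.+1 + j + 1) ^ (l - 1))%:R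
    else (j%:R) ^+ s * a j.

From mathcomp Require Import all_boot all_order all_algebra.
From mathcomp Require Import zify.
Import GRing.Theory Num.Theory.
Set Implicit Arguments.
Unset Strict Implicit.
Unset Printing Implicit Defensive.

Local Open Scope ring_scope.

(* Each row of A_{s,a} lists the values at the nodes 0, ..., l of a polynomial
   of degree at most l: (X + c_i)^(l-1) with c_i = (i-1)(l+1) + 1 for the first
   l rows, and X^s p for the last one, where p(t) = q(xi + t h) interpolates a at
   the nodes.  Factoring out the Vandermonde matrix of the nodes leaves the
   matrix of coefficients, whose last column vanishes except in the last row,
   so det A_{s,a} = kappa [X^l](X^s p) = kappa p_(l-s).  Here kappa != 0 because
   the powers (X + c_i)^(l-1) of distinct c_i are linearly independent.  Since
   p has the degree of q, p_(l-s) is zero for s < l - deg q and is the leading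
   coefficient for s = l - deg q. *)

Lemma coef_exp_XaddC (R : comNzRingType) (c : R) n k :
  (('X + c%:P) ^+ n)`_k = c ^+ (n - k) *+ 'C(n, k).
Proof.
have -> : ('X + c%:P) ^+ n = \poly_(i < n.+1) (c ^+ (n - i) *+ 'C(n, i)).
  rewrite addrC exprDn poly_def; apply: eq_bigr => i _.
  by rewrite -polyC_exp mul_polyC scalerMnl.
rewrite coef_poly; case: ltnP => // nk.
by rewrite bin_small.
Qed.

Lemma mul_coef_mx_Vandermonde (R : comNzRingType) p m n (P : 'I_p -> {poly R})
    (x : 'rV[R]_n) :
  (forall i, size (P i) <= m)%N ->
  \matrix_(i < p, k < m) (P i)`_k *m Vandermonde m x = \matrix_(i, j) (P i).[x 0 j].
Proof.
move=> sizeP; apply/matrixP => i j; rewrite !mxE (horner_coef_wide _ (sizeP i)).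
by apply: eq_bigr => k _; rewrite !mxE.
Qed.

Lemma det_Vandermonde_neq0 (R : idomainType) n (x : 'rV[R]_n) :
  injective (x 0) -> \det (Vandermonde n x) != 0.
Proof.
move=> x_inj; rewrite det_Vandermonde; apply/prodf_neq0 => i _.
apply/prodf_neq0 => j lt_ij; rewrite subr_eq0; apply: contraTneq lt_ij.
by move=> /x_inj ->; rewrite ltnn.
Qed.

Lemma expand_det_last_col (R : comNzRingType) n (M : 'M[R]_n.+1) :
  (forall i : 'I_n, M (lift ord_max i) ord_max = 0) ->
  \det M = M ord_max ord_max * \det (row' ord_max (col' ord_max M)).
Proof.
move=> M_col; rewrite (expand_det_col _ ord_max) big_ord_recr /=.
rewrite big1 ?add0r => [|i _].
  by rewrite /cofactor -signr_odd addnn odd_double mul1r.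
have -> : widen_ord (leqnSn n) i = lift ord_max i.
  by apply/val_inj; rewrite /= /bump leqNgt ltn_ord.
by rewrite M_col mul0r.
Qed.

Lemma det_coef_exp_XaddC_neq0 (R : numFieldType) n (c : 'I_n.+1 -> R) :
  injective c -> (forall i, c i != 0) ->
  \det (\matrix_(i, k < n.+1) (('X + (c i)%:P) ^+ n)`_k) != 0.
Proof.
move=> c_inj c_neq0.
have cV_inj : injective ((\row_i (c i)^-1 : 'rV_n.+1) 0).
  by move=> i j; rewrite !mxE => /invr_inj /c_inj.
rewrite -det_tr.
have -> : (\matrix_(i, k < n.+1) (('X + (c i)%:P) ^+ n)`_k)^T =
    diag_mx (\row_(k < n.+1) 'C(n, k)%:R) *m
    Vandermonde n.+1 (\row_i (c i)^-1) *m diag_mx (\row_i c i ^+ n).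
  apply/matrixP => k i; rewrite mul_mx_diag mul_diag_mx !mxE coef_exp_XaddC.
  rewrite -mulr_natl -mulrA exprVn; congr (_ * _).
  rewrite -[in c i ^+ n](subnK (ltnSE (ltn_ord k))) exprD [_ * c i ^+ k]mulrC.
  by rewrite mulKf ?expf_neq0.
rewrite !det_mulmx !det_diag mulf_neq0 ?mulf_neq0 ?det_Vandermonde_neq0 //.
  by apply/prodf_neq0 => k _; rewrite mxE pnatr_eq0 -lt0n bin_gt0 -ltnS.
by apply/prodf_neq0 => i _; rewrite mxE expf_neq0.
Qed.

Lemma coef_eq0_size_le (R : nzSemiRingType) (p : {poly R}) k :
  (size p <= k.+1)%N -> (p`_k == 0) = (size p != k.+1).
Proof.
rewrite leq_eqVlt => /predU1P [size_p | lt_size].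
  rewrite size_p eqxx -[k]/(k.+1.-1) -size_p -lead_coefE lead_coef_eq0.
  by rewrite -size_poly_eq0 size_p.
by rewrite nth_default ?eqxx ?(ltn_eqF lt_size) // -ltnS.
Qed.

Lemma det_A_mat_eq0 (R : realFieldType) n s (a : 'I_n.+2 -> R) (f : {poly R}) :
  (size f <= n.+2)%N -> (forall j : 'I_n.+2, f.[j%:R] = j%:R ^+ s * a j) ->
  (\det (@A_mat R n.+1 s a) == 0) = (f`_n.+1 == 0).
Proof.
move=> size_f f_nodes.
pose c (i : nat) : R := (i * n.+2 + 1)%:R.
pose P (i : 'I_n.+2) := if (i < n.+1)%N then ('X + (c i)%:P) ^+ n else f.
have size_P i : (size (P i) <= n.+2)%N.
  rewrite /P; case: ifP => // _.
  by apply: leq_trans (size_poly_exp_leq _ _) _; rewrite size_XaddC mul1n.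
have -> : @A_mat R n.+1 s a = \matrix_(i, j) (P i).[(\row_j j%:R : 'rV_n.+2) 0 j].
  apply/matrixP => i j; rewrite !mxE /P; case: ifP => _; last by rewrite f_nodes.
  by rewrite horner_exp hornerD hornerX hornerC /c subSS subn0 natrX addnAC addnC natrD.
have nodes_inj : injective ((\row_j j%:R : 'rV[R]_n.+2) 0).
  by move=> i j; rewrite !mxE => /eqP; rewrite eqr_nat => /eqP /val_inj.
rewrite -(mul_coef_mx_Vandermonde _ size_P) det_mulmx mulf_eq0.
rewrite (negbTE (det_Vandermonde_neq0 nodes_inj)) orbF.
rewrite expand_det_last_col => [|i]; last first.
  by rewrite mxE /P lift_max ltn_ord coef_exp_XaddC bin_small.
have -> : row' ord_max (col' ord_max (\matrix_(i, k) (P i)`_k)) =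
    \matrix_(i, k < n.+1) (('X + (c i)%:P) ^+ n)`_k.
  by apply/matrixP => i k; rewrite !mxE /P !lift_max ltn_ord.
have det_top : \det (\matrix_(i, k < n.+1) (('X + (c i)%:P) ^+ n)`_k) != 0.
  apply: det_coef_exp_XaddC_neq0 => [i j|i]; last by rewrite pnatr_eq0 addn1.
  by move/eqP; rewrite eqr_nat eqn_add2r eqn_pmul2r // => /eqP /val_inj.
by rewrite mulf_eq0 (negbTE det_top) orbF mxE /P ltnn.
Qed.

Lemma det_A_mat_eq0_size (R : realFieldType) n (xi h : R) (a : 'I_n.+2 -> R)
    (q : {poly R}) s :
  h != 0 -> (forall i : 'I_n.+2, q.[xi + i%:R * h] = a i) ->
  (s <= n.+1)%N -> (s + size q <= n.+2)%N ->
  (\det (@A_mat R n.+1 s a) == 0) = (s + size q != n.+2).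
Proof.
move=> h_neq0 q_nodes le_s le_s_size_q.
have [p size_p p_nodes] :
    exists2 p : {poly R}, size p = size q & forall j : 'I_n.+2, p.[j%:R] = a j.
  exists (q \Po (h%:P * 'X + xi%:P)) => [|j].
    rewrite size_comp_poly2 // size_MXaddC polyC_eq0 (negbTE h_neq0).
    by rewrite size_polyC h_neq0.
  by rewrite horner_comp !hornerE -q_nodes addrC mulrC.
rewrite (@det_A_mat_eq0 _ _ _ _ ('X^s * p)); last first.
- by move=> j; rewrite hornerM hornerXn p_nodes.
- by apply: leq_trans (size_polyMleq _ _) _; rewrite size_polyXn size_p addSn.
have size_p_le : (size p <= (n.+1 - s).+1)%N by rewrite size_p; lia.
rewrite coefXnM ltnNge le_s /= (coef_eq0_size_le size_p_le) size_p.
by rewrite -(eqn_add2l s) addnS subnKC.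
Qed.

Theorem theorem1 (R : realFieldType) (l : nat) (xi h : R) (a : 'I_l.+1 -> R)
    (q : {poly R}) (m : nat) :
  (1 <= l)%N -> h != 0 ->
  (size q <= l.+1)%N ->
  (forall i : 'I_l.+1, q.[xi + i%:R * h] = a i) ->
  (m <= l)%N ->
  (size q = (l - m).+1)%N <->
  ((forall s : nat, (s < m)%N -> \det (@A_mat R l s a) = 0) /\ \det (@A_mat R l m a) != 0).
Proof.
move=> l_gt0 h_neq0 size_q q_nodes le_ml.
case: l a q_nodes size_q le_ml l_gt0 => [//|n] a q_nodes size_q le_mn _.
have det_eq0 := det_A_mat_eq0_size h_neq0 q_nodes.
split=> [size_qE | [det_lt_m det_m]].
  split=> [s lt_sm|]; first by apply/eqP; rewrite det_eq0; lia.
  by rewrite det_eq0; lia.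
have le_size_q : (size q + m <= n.+2)%N.
  rewrite leqNgt; apply/negP => lt_size_q.
  have /eqP := det_lt_m (n.+2 - size q)%N ltac:(lia).
  by rewrite det_eq0; lia.
by move: det_m; rewrite det_eq0; lia.
Qed.
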